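(* Let $k\ge 1$ be an integer. Then (i) for each $n\ge 1$, $\chi_{\mu_k}(P_n)=\lceil n/2\rceil$; and (ii) for each $n\ge 3$, $\chi_{\mu_k}(C_n)=\lceil n/3\rceil$ if $n\le 3k$, and $\chi_{\mu_k}(C_n)=\lceil n/2\rceil$ otherwise.
   Context: $P_n$ and $C_n$ denote the path and cycle on $n$ vertices. A $u,v$-geodesic is a shortest $u,v$-path. For a positive integer $k$, a set $M\subseteq V(G)$ is a $k$-distance mutual-visibility set if for every two vertices $u,v\in M$ there exists a $u,v$-geodesic of length at most $k$ none of whose internal vertices lies in $M$. $\chi_{\mu_k}(G)$ is the minimum cardinality of a partition of $V(G)$ into $k$-distance mutual-visibility sets. *)

From mathcomp Require Import all_boot.
Set Implicit Arguments. Unset Strict Implicit. Unset Printing Implicit Defensive.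

Section Vis.
Variables (T : finType) (e : rel T).

(* A u,v-walk described by the list q of its internal vertices:
   u, q_1, ..., q_m, v with consecutive vertices adjacent; its length is size q + 1. *)
Definition is_walk (u : T) (q : seq T) (v : T) : Prop := path e u (rcons q v).

(* A u,v-geodesic: a u,v-walk of minimum length (such a walk is necessarily a path). *)
Definition is_geodesic (u : T) (q : seq T) (v : T) : Prop :=
  is_walk u q v /\ forall q', is_walk u q' v -> size q <= size q'.

Definition kdmv_set (k : nat) (M : {set T}) : Prop :=
  forall u v, u \in M -> v \in M -> u != v ->
    exists q, [/\ is_geodesic u q v, (size q).+1 <= k & all (fun x => x \notin M) q].

Definition kdmv_partition (k : nat) (P : {set {set T}}) : Prop :=
  partition P [set: T] /\ forall B, B \in P -> kdmv_set k B.

Definition is_chi_mu (k m : nat) : Prop :=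
  (exists P, kdmv_partition k P /\ #|P| = m) /\
  (forall P, kdmv_partition k P -> m <= #|P|).
End Vis.

Definition path_graph (n : nat) : rel 'I_n :=
  fun i j => (i.+1 == j :> nat) || (j.+1 == i :> nat).

(* Cycle C_n on vertex set {0,...,n-1} (for n >= 3). *)
Definition cycle_graph (n : nat) : rel 'I_n :=
  fun i j => (i.+1 %% n == j :> nat) || (j.+1 %% n == i :> nat).
Arguments path_graph n : clear implicits.
Arguments cycle_graph n : clear implicits.

From mathcomp Require Import all_boot zify.
Set Implicit Arguments. Unset Strict Implicit. Unset Printing Implicit Defensive.

(* Lower bounds: in P_n the middle one of three vertices separates the other
   two, and in C_n two alternate vertices of four separate the other two, so
   visibility sets have at most 2 resp. 3 vertices.  If n > 3k, three vertices
   of C_n do not fit either: the geodesic between two of them avoids the third,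
   so it runs along the arc not containing it; these three arcs cover the cycle
   and each has length at most k.  A partition into sets of size at most c has
   at least ceil(n/c) blocks.  Upper bounds: the pairs {2i, 2i+1} are adjacent,
   and for n <= 3k the residue classes modulo t = ceil(n/3) work, since
   consecutive members of a class are joined by an arc of length at most
   t <= k through no other member. *)

Section Visibility.
Variables (T : finType) (e : rel T).

Lemma path_lipschitz_last (A : pred T) (f : T -> nat) :
  (forall x y, A x -> A y -> e x y -> f y <= (f x).+1) ->
  forall p x, path e x p -> all A (x :: p) -> f (last x p) <= f x + size p.
Proof.
move=> f_lip; elim=> [|y p IHp] x /=; first by rewrite addn0.
case/andP=> exy py /and3P[Ax Ay Ap].
have := IHp y py; rewrite /= Ay Ap => /(_ isT).
have := f_lip x y Ax Ay exy; lia.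
Qed.

Lemma path_no_crossing (W U : pred T) :
  (forall x y, W x -> U y -> e x y -> False) -> (forall x, W x -> U x -> False) ->
  forall p x, path e x p -> all (predU W U) (x :: p) -> W x -> U (last x p) -> False.
Proof.
move=> noWU disjWU; elim=> [|y p IHp] x /=; first by move=> _ _; apply: disjWU.
case/andP=> exy py /and3P[_ WUy WUp] Wx Ulast.
case/orP: WUy => [Wy|Uy]; last exact: (noWU x y).
by apply: (IHp y py) => //=; rewrite WUp Wy.
Qed.

Definition kvisible k (M : {set T}) u v :=
  exists q, [/\ is_geodesic e u q v, (size q).+1 <= k & all (fun x => x \notin M) q].

Lemma is_walk_rev : symmetric e -> forall u q v, is_walk e u q v -> is_walk e v (rev q) u.
Proof.
move=> e_sym u q v; rewrite /is_walk -(@eq_path _ (fun x y => e y x)); last first.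
  by move=> x y; rewrite e_sym.
by rewrite -rev_path last_rcons belast_rcons rev_cons.
Qed.

Lemma kvisible_sym k M u v : symmetric e -> kvisible k M u v -> kvisible k M v u.
Proof.
move=> e_sym [q [[quv q_min] q_size q_out]].
exists (rev q); split; rewrite ?size_rev ?all_rev //.
split; first exact: (is_walk_rev e_sym quv).
by move=> q' /(is_walk_rev e_sym) /q_min; rewrite !size_rev.
Qed.

Lemma kdmv_set_clique k (M : {set T}) : 0 < k ->
  {in M &, forall u v, u != v -> e u v} -> kdmv_set e k M.
Proof.
move=> k_gt0 M_clique u v uM vM uv; exists [::]; split=> //; split=> //.
by rewrite /is_walk /= M_clique.
Qed.

Lemma card_le_mul_partition (P : {set {set T}}) (D : {set T}) c :
  partition P D -> {in P, forall B : {set T}, #|B| <= c} -> #|D| <= c * #|P|.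
Proof.
move=> partP Ple; rewrite (card_partition partP) mulnC -sum_nat_const.
exact: leq_sum.
Qed.

Lemma kdmv_partition_of_labels k m (lab : T -> nat) :
  (forall x, lab x < m) -> (forall i, i < m -> exists x, lab x = i) ->
  (forall i, kdmv_set e k [set x | lab x == i]) ->
  exists P, kdmv_partition e k P /\ #|P| = m.
Proof.
move=> lab_lt lab_onto lab_kdmv.
exists [set [set x | lab x == val i] | i : 'I_m]; split; last first.
  rewrite card_imset ?card_ord // => i j /setP eq_ij.
  have [x lab_x] := lab_onto i (ltn_ord i).
  by have := eq_ij x; rewrite !inE lab_x eqxx => /esym/eqP/val_inj.
split; last by move=> B /imsetP[i _ ->].
apply/and3P; split.
- apply/eqP/setP => x; rewrite inE; apply/bigcupP.
  by exists [set y | lab y == lab x]; [apply/imsetP; exists (Ordinal (lab_lt x)) | rewrite inE].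
- apply/trivIsetP => _ _ /imsetP[i _ ->] /imsetP[j _ ->] neq_ij.
  rewrite disjoints_subset; apply/subsetP => x; rewrite !inE => /eqP lab_i.
  by apply: contra neq_ij => /eqP lab_j; apply/eqP/setP => y; rewrite !inE -lab_i lab_j.
- apply/imsetP => -[i _ /setP eq_i].
  have [x lab_x] := lab_onto i (ltn_ord i).
  by have := eq_i x; rewrite !inE lab_x eqxx.
Qed.

Lemma is_chi_mu_of_labels k c m (lab : T -> nat) :
  (forall x, lab x < m) -> (forall i, i < m -> exists x, lab x = i) ->
  (forall i, kdmv_set e k [set x | lab x == i]) ->
  (forall M, kdmv_set e k M -> #|M| <= c) -> c * m.-1 < #|T| -> is_chi_mu e k m.
Proof.
move=> lab_lt lab_onto lab_kdmv kdmv_le m_min; split.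
  exact: kdmv_partition_of_labels lab_lt lab_onto lab_kdmv.
move=> P [partP P_kdmv].
have := card_le_mul_partition partP (fun B BP => kdmv_le B (P_kdmv B BP)).
rewrite cardsT => /(leq_trans m_min); rewrite ltn_mul2l; lia.
Qed.

End Visibility.

Lemma is_chi_mu_ord n (e : rel 'I_n) k c m (lab : nat -> nat) :
  (forall x, x < n -> lab x < m) -> (forall i, i < m -> exists2 x, x < n & lab x = i) ->
  (forall i, kdmv_set e k [set x : 'I_n | lab x == i]) ->
  (forall M, kdmv_set e k M -> #|M| <= c) -> c * m.-1 < n -> is_chi_mu e k m.
Proof.
move=> lab_lt lab_onto lab_kdmv kdmv_le m_min.
apply: (is_chi_mu_of_labels (c := c) (lab := fun x : 'I_n => lab x)); rewrite ?card_ord //.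
- by move=> x; apply: lab_lt.
- by move=> i /lab_onto[x x_lt lab_x]; exists (Ordinal x_lt).
Qed.

Section OrdinalSets.
Variables (n : nat) (M : {set 'I_n}) (x0 : 'I_n).

Lemma sorted_enum_ord_set : sorted ltn [seq val x | x <- enum M].
Proof.
apply: (subseq_sorted ltn_trans _ (iota_ltn_sorted 0 n)).
rewrite -val_enum_ord; apply: map_subseq.
have -> : enum M = filter (mem M) (enum 'I_n) by rewrite enumT.
exact: filter_subseq.
Qed.

Lemma nth_enum_ord_set_lt i j : i < j < #|M| ->
  nth x0 (enum M) i < nth x0 (enum M) j.
Proof.
move=> /andP[ij jM]; have size_M : size (enum M) = #|M| by rewrite cardE.
rewrite -!(nth_map x0 (val x0)) ?size_M //; last exact: ltn_trans jM.
apply: (sorted_ltn_nth ltn_trans (val x0) sorted_enum_ord_set) => //;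
  rewrite inE size_map size_M //; exact: ltn_trans jM.
Qed.

Lemma nth_enum_ord_set_in i : i < #|M| -> nth x0 (enum M) i \in M.
Proof. by move=> iM; rewrite -mem_enum mem_nth // -cardE. Qed.

End OrdinalSets.

Lemma ord_set_increasing3 n (M : {set 'I_n}) : 2 < #|M| ->
  exists a b c : 'I_n, [/\ [/\ a \in M, b \in M & c \in M], a < b & b < c].
Proof.
move=> M_gt2; have [x0 _] : exists x0, x0 \in M by apply/card_gt0P; lia.
exists (nth x0 (enum M) 0), (nth x0 (enum M) 1), (nth x0 (enum M) 2).
by split; [split|..];
  (apply: nth_enum_ord_set_in || apply: nth_enum_ord_set_lt); lia.
Qed.

Lemma ord_set_increasing4 n (M : {set 'I_n}) : 3 < #|M| ->
  exists a b c d : 'I_n, [/\ [/\ a \in M, b \in M, c \in M & d \in M], a < b, b < c & c < d].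
Proof.
move=> M_gt3; have [x0 _] : exists x0, x0 \in M by apply/card_gt0P; lia.
exists (nth x0 (enum M) 0), (nth x0 (enum M) 1), (nth x0 (enum M) 2), (nth x0 (enum M) 3).
by split; [split|..];
  (apply: nth_enum_ord_set_in || apply: nth_enum_ord_set_lt); lia.
Qed.

Lemma path_graph_adj n (x y : 'I_n) : path_graph n x y -> x.+1 = y :> nat \/ y.+1 = x :> nat.
Proof. by case/orP=> /eqP; [left | right]. Qed.

Lemma kdmv_path_card n k (M : {set 'I_n}) : kdmv_set (path_graph n) k M -> #|M| <= 2.
Proof.
move=> M_kdmv; rewrite leqNgt; apply/negP => /ord_set_increasing3[a [b [c [[aM bM cM] ab bc]]]].
have ac : a != c by rewrite neq_ltn (ltn_trans ab bc).
have [q [[q_walk _] _ q_out]] := M_kdmv a c aM cM ac.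
apply: (path_no_crossing (W := fun x : 'I_n => x < b) (U := fun x : 'I_n => b < x) _ _ q_walk).
- by move=> x y /= xb bx /path_graph_adj; lia.
- by move=> x /=; lia.
- rewrite /= all_rcons /= ab bc orbT /=; apply/allP => x /(allP q_out) xM /=.
  by rewrite -neq_ltn; apply: contraNneq xM => /val_inj ->.
- by [].
- by rewrite last_rcons.
Qed.

Lemma cycle_graph_adj n (x y : 'I_n) : cycle_graph n x y ->
  x.+1 = y :> nat \/ y.+1 = x :> nat \/ (x.+1 = n /\ y = 0 :> nat) \/ (y.+1 = n /\ x = 0 :> nat).
Proof.
have succ_mod (z : 'I_n) : z.+1 %% n = z.+1 /\ z.+1 < n \/ z.+1 = n /\ z.+1 %% n = 0.
  have := ltn_ord z; rewrite leq_eqVlt => /orP[/eqP z_n|z_lt]; last by left; rewrite modn_small.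
  by right; rewrite {2}z_n modnn.
rewrite /cycle_graph; move: (succ_mod x) (succ_mod y).
by move: (x.+1 %% n) (y.+1 %% n) => sx sy ? ? /orP[] /eqP; lia.
Qed.

Lemma cycle_graph_sym n : symmetric (cycle_graph n).
Proof. by move=> x y; rewrite /cycle_graph orbC. Qed.

Lemma path_graph_sub_cycle n (x y : 'I_n) : path_graph n x y -> cycle_graph n x y.
Proof.
have x_lt := ltn_ord x; have y_lt := ltn_ord y.
by case/orP=> /eqP xy; apply/orP; [left | right]; rewrite modn_small ?xy.
Qed.

Lemma kdmv_cycle_card n k (M : {set 'I_n}) : kdmv_set (cycle_graph n) k M -> #|M| <= 3.
Proof.
move=> M_kdmv; rewrite leqNgt; apply/negP.
case/ord_set_increasing4=> a [b [c [d [[aM bM cM dM] ab bc cd]]]].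
have ac : a != c by rewrite neq_ltn (ltn_trans ab bc).
have [q [[q_walk _] _ q_out]] := M_kdmv a c aM cM ac.
apply: (path_no_crossing (W := fun x : 'I_n => (x < b) || (d < x))
                         (U := fun x : 'I_n => (b < x) && (x < d)) _ _ q_walk).
- by move=> x y /= /orP xbd /andP bxd /cycle_graph_adj; have := ltn_ord d; lia.
- by move=> x /= /orP ? /andP ?; lia.
- rewrite /= all_rcons /= ab bc cd /= orbT /=; apply/allP => x /(allP q_out) xM /=.
  have xb : x != b :> nat by apply: contraNneq xM => /val_inj ->.
  have xd : x != d :> nat by apply: contraNneq xM => /val_inj ->.
  lia.
- by rewrite /= ab.
- by rewrite last_rcons /= bc cd.
Qed.

(* The position of x on the path obtained by cutting the cycle at c. *)
Definition cut_pos n (c x : 'I_n) : nat := if c < x then x - c else x + n - c.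

Lemma cut_pos_lipschitz n (c x y : 'I_n) : x != c -> y != c -> cycle_graph n x y ->
  cut_pos c y <= (cut_pos c x).+1.
Proof.
rewrite /cut_pos -!val_eqE => /= xc yc /cycle_graph_adj.
have := ltn_ord x; have := ltn_ord y; have := ltn_ord c.
by case: ifP; case: ifP; lia.
Qed.

Lemma kdmv_cycle_cut_pos n k (M : {set 'I_n}) (u v c : 'I_n) :
  kdmv_set (cycle_graph n) k M -> [/\ u \in M, v \in M & c \in M] ->
  [/\ u != v, u != c & v != c] -> cut_pos c v <= cut_pos c u + k.
Proof.
move=> M_kdmv [uM vM cM] [uv uc vc].
have [q [[q_walk _] q_size q_out]] := M_kdmv u v uM vM uv.
have q_avoid_c : all (fun x => x != c) q.
  by apply/allP => x /(allP q_out); apply: contraNneq => ->.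
have := path_lipschitz_last (A := fun x => x != c) (@cut_pos_lipschitz n c) q_walk.
rewrite last_rcons size_rcons /= all_rcons uc vc q_avoid_c => /(_ isT).
by move/leq_trans; apply; rewrite leq_add2l.
Qed.

Lemma kdmv_cycle_card_long n k (M : {set 'I_n}) : 3 * k < n ->
  kdmv_set (cycle_graph n) k M -> #|M| <= 2.
Proof.
move=> n_gt M_kdmv; rewrite leqNgt; apply/negP.
case/ord_set_increasing3=> a [b [c [[aM bM cM] ab bc]]].
have ac : a < c := ltn_trans ab bc.
have [ne_ab ne_ba] : a != b /\ b != a by rewrite !neq_ltn ab orbT.
have [ne_bc ne_cb] : b != c /\ c != b by rewrite !neq_ltn bc orbT.
have [ne_ac ne_ca] : a != c /\ c != a by rewrite !neq_ltn ac orbT.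
have := kdmv_cycle_cut_pos M_kdmv (And3 aM bM cM) (And3 ne_ab ne_ac ne_bc).
have := kdmv_cycle_cut_pos M_kdmv (And3 bM cM aM) (And3 ne_bc ne_ba ne_ca).
have := kdmv_cycle_cut_pos M_kdmv (And3 cM aM bM) (And3 ne_ca ne_cb ne_ab).
rewrite /cut_pos ab bc ac (leq_gtF (ltnW ab)) (leq_gtF (ltnW bc)) (leq_gtF (ltnW ac)).
have := ltn_ord c; lia.
Qed.

(* [u - x + (x - u)] is |u - x| in truncated arithmetic. *)
Definition cycle_dist n (u x : 'I_n) : nat := minn (u - x + (x - u)) (n - (u - x + (x - u))).

Lemma cycle_dist_lipschitz n (u x y : 'I_n) : cycle_graph n x y ->
  cycle_dist u y <= (cycle_dist u x).+1.
Proof.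
move/cycle_graph_adj; rewrite /cycle_dist.
have := ltn_ord x; have := ltn_ord y; have := ltn_ord u; lia.
Qed.

Lemma modn_lt_double a n : a < n + n -> a %% n = if a < n then a else a - n.
Proof.
case: ifP => [a_lt _ | a_ge a_lt]; first by rewrite modn_small.
by rewrite -{1}(@subnK n a) ?modnDr ?modn_small; lia.
Qed.

Lemma path_map_iota (T : Type) (e : rel T) (f : nat -> T) :
  (forall i, e (f i) (f i.+1)) -> forall m a, path e (f a) [seq f i | i <- iota a.+1 m].
Proof. by move=> f_step; elim=> [|m IHm] a //=; rewrite f_step IHm. Qed.

Lemma kvisible_cycle_arc n k (M : {set 'I_n}) (u v : 'I_n) m :
  0 < m <= k -> m + m <= n -> v = (u + m) %% n :> nat ->
  (forall i (x : 'I_n), 0 < i < m -> x = (u + i) %% n :> nat -> x \notin M) ->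
  kvisible (cycle_graph n) k M u v.
Proof.
case: m => [//|m] /= mk m2 v_def arc_out.
have n_gt0 : 0 < n by have := ltn_ord u; lia.
pose f i : 'I_n := Ordinal (ltn_pmod (u + i) n_gt0).
have f_step i : cycle_graph n (f i) (f i.+1).
  by apply/orP; left; rewrite /= -addn1 modnDml addn1 addnS.
have f0 : f 0 = u by apply: val_inj; rewrite /= addn0 modn_small.
have fm : f m.+1 = v by apply: val_inj; rewrite /= v_def.
have dist_uv : cycle_dist u v = m.+1.
  rewrite /cycle_dist v_def modn_lt_double; last by have := ltn_ord u; lia.
  by have := ltn_ord u; case: ifP; lia.
have dist_uu : cycle_dist u u = 0 by rewrite /cycle_dist subnn; lia.
exists [seq f i | i <- iota 1 m]; split; last first.
- rewrite all_map; apply/allP => i; rewrite mem_iota => i_range /=.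
  by apply: (arc_out i) => //; lia.
- by rewrite size_map size_iota.
split.
  rewrite /is_walk -fm -map_rcons -cats1 -(iotaD 1 m 1) addn1 -{1}f0.
  exact: path_map_iota.
move=> q' q'_walk.
have := path_lipschitz_last (A := predT) (fun x y _ _ => @cycle_dist_lipschitz n u x y) q'_walk.
by rewrite last_rcons size_rcons dist_uv dist_uu all_predT size_map size_iota => /(_ isT).
Qed.

Lemma modn_lt3_cases t x : x < 3 * t ->
  x %% t < t /\ (x = x %% t \/ x = x %% t + t \/ x = x %% t + 2 * t).
Proof.
move=> xt; have t0 : 0 < t by lia.
have := divn_eq x t; have := ltn_pmod x t0.
have : x %/ t < 3 by rewrite ltn_divLR // mulnC.
by move: (x %/ t) (x %% t) => [|[|[|q]]] r // _ r_lt ->; lia.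
Qed.

Lemma kdmv_cycle_residues n k t j : t <= k -> n <= 3 * t -> t + t <= n ->
  kdmv_set (cycle_graph n) k [set x : 'I_n | x %% t == j].
Proof.
move=> tk n_le n_ge.
suff fwd (u v : 'I_n) : u %% t = j -> v %% t = j -> u < v ->
    kvisible (cycle_graph n) k [set x : 'I_n | x %% t == j] u v.
  move=> u v; rewrite !inE => /eqP uj /eqP vj; rewrite neq_ltn => /orP[uv | vu].
    exact: fwd.
  by apply: kvisible_sym (@cycle_graph_sym n) _; apply: fwd.
have residue (x : 'I_n) : x %% t = j ->
    j < t /\ (x = j :> nat \/ x = j + t :> nat \/ x = j + 2 * t :> nat).
  by move=> <-; apply: modn_lt3_cases; have := ltn_ord x; lia.
move=> /residue[jt u_cases] /residue[_ v_cases] uv; have v_lt := ltn_ord v.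
have [v_next | [u_j v_wrap]] : v = u + t :> nat \/ (u = j :> nat /\ v = u + 2 * t :> nat) by lia.
- apply: (@kvisible_cycle_arc _ _ _ _ _ t); [lia | lia | by rewrite modn_small; lia |].
  move=> i x i_range; rewrite modn_small ?inE; last by lia.
  by move=> x_def; apply/eqP => /residue[_]; lia.
- apply: kvisible_sym (@cycle_graph_sym n) _.
  apply: (@kvisible_cycle_arc _ _ _ _ _ (n - 2 * t)); [lia | lia | |].
    by rewrite modn_lt_double; [case: ifP | ]; lia.
  move=> i x i_range; rewrite modn_lt_double ?inE; last by lia.
  by move=> x_def; apply/eqP => /residue[_]; move: x_def; case: ifP; lia.
Qed.

Lemma path_graph_halves n (u v : 'I_n) : u %/ 2 = v %/ 2 -> u != v -> path_graph n u v.
Proof.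
move=> uv_half uv; have uv_nat : u != v :> nat := uv.
by rewrite /path_graph; apply/orP; lia.
Qed.

Lemma kdmv_path_halves n k i : 0 < k -> kdmv_set (path_graph n) k [set x : 'I_n | x %/ 2 == i].
Proof.
move=> k_gt0; apply: kdmv_set_clique => // u v; rewrite !inE => /eqP ui /eqP vi.
by apply: path_graph_halves; rewrite ui vi.
Qed.

Lemma kdmv_cycle_halves n k i : 0 < k -> kdmv_set (cycle_graph n) k [set x : 'I_n | x %/ 2 == i].
Proof.
move=> k_gt0; apply: kdmv_set_clique => // u v; rewrite !inE => /eqP ui /eqP vi uv.
by apply/path_graph_sub_cycle/path_graph_halves; rewrite ?ui ?vi.
Qed.

Unset Implicit Arguments.

Theorem proposition2p4 (k : nat) (hk : 1 <= k) :
  (forall n : nat, 1 <= n -> is_chi_mu (path_graph n) k ((n + 1) %/ 2)) /\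
  (forall n : nat, 3 <= n ->
     is_chi_mu (cycle_graph n) k (if n <= 3 * k then (n + 2) %/ 3 else (n + 1) %/ 2)).
Proof.
have halves_onto n i : i < (n + 1) %/ 2 -> exists2 x, x < n & x %/ 2 = i.
  by move=> i_lt; exists (2 * i); lia.
split=> n n_ge.
  apply: (is_chi_mu_ord (c := 2) (lab := fun x => x %/ 2)).
  - by move=> x; lia.
  - exact: halves_onto.
  - by move=> i; apply: kdmv_path_halves.
  - exact: kdmv_path_card.
  - lia.
case: ifP => [n_short | /negbT n_long].
  apply: (is_chi_mu_ord (c := 3) (lab := fun x => x %% ((n + 2) %/ 3))).
  - by move=> x _; rewrite ltn_mod; lia.
  - by move=> i i_lt; exists i; rewrite ?modn_small; lia.
  - by move=> i; apply: kdmv_cycle_residues; lia.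
  - exact: kdmv_cycle_card.
  - lia.
apply: (is_chi_mu_ord (c := 2) (lab := fun x => x %/ 2)).
- by move=> x; lia.
- exact: halves_onto.
- by move=> i; apply: kdmv_cycle_halves.
- by move=> M; apply: kdmv_cycle_card_long; lia.
- lia.
Qed.
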